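(* Let $f\colon\mathbb{R}^n\to\mathbb{R}$ be differentiable, $\mu$-strongly convex, with $\|\nabla f(x)-\nabla f(y)\|\le L\|x-y\|$ for all $x,y$ (Euclidean norm), where $0<\mu<L$, and let $x_\star$ be its minimizer, $f_\star=f(x_\star)$. Let $\kappa=L/\mu$ and $\gamma=\frac{\sqrt{8\kappa+1}+3}{2\kappa-2}$. Given $x_0$, let $y_0=x_0$ and for $k=0,1,\dots$ \[ y_{k+1}=x_k-\tfrac1L\nabla f(x_k),\qquad x_{k+1}=y_{k+1}+\frac{1}{2\gamma+1}(y_{k+1}-y_k)+\frac{1}{2\gamma+1}(y_{k+1}-x_k). \] Then for $k=1,2,\dots$, \[ f(x_k)-f_\star\le\frac{(1+\gamma)^{-k+2}}{2\gamma}\cdot\frac{\mu+2L}{2}\,\|x_0-x_\star\|^2. \]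
   Context: A function $f$ is $\mu$-strongly convex if $f(x)-\frac{\mu}{2}\|x\|^2$ is convex. *)

From HB Require Import structures.
From mathcomp Require Import all_boot all_order all_algebra.
From mathcomp Require Import all_classical all_reals all_analysis.
Set Implicit Arguments. Unset Strict Implicit. Unset Printing Implicit Defensive.
Import Order.TTheory GRing.Theory Num.Theory.
Import numFieldNormedType.Exports.
Local Open Scope ring_scope.

(* Euclidean inner product and norm on R^n (the default matrix norm in
   MathComp-Analysis is the sup norm, so we define the Euclidean one). *)
Definition edot (R : realType) (n : nat) (u v : 'rV[R]_n) : R :=
  \sum_(i < n) u ord0 i * v ord0 i.
Definition enorm (R : realType) (n : nat) (u : 'rV[R]_n) : R :=
  Num.sqrt (edot u u).

Definition grad (R : realType) (n : nat) (f : 'rV[R]_n -> R) (x : 'rV[R]_n)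
  : 'rV[R]_n := \row_j ('D_(delta_mx ord0 j) f x).

Definition convex_fun (R : realType) (n : nat) (g : 'rV[R]_n -> R) : Prop :=
  forall (x y : 'rV[R]_n) (t : R), 0 <= t -> t <= 1 ->
    g (t *: x + (1 - t) *: y) <= t * g x + (1 - t) * g y.

Definition strongly_convex (R : realType) (n : nat) (mu : R)
  (f : 'rV[R]_n -> R) : Prop :=
  convex_fun (fun x => f x - mu / 2 * enorm x ^+ 2).

From HB Require Import structures.
From mathcomp Require Import all_boot all_order all_algebra.
From mathcomp Require Import all_classical all_reals all_analysis.
From mathcomp Require Import lra ring.
Import Order.TTheory GRing.Theory Num.Theory.
Import numFieldNormedType.Exports.
Local Open Scope ring_scope.
Set Implicit Arguments. Unset Strict Implicit.

(* For a mu-strongly convex f with L-Lipschitz gradient g, the descent lemma and the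
   first-order condition of strong convexity, applied at a well-chosen point, give the
   interpolation inequality
     f a >= f b + <g b, a - b> + mu/2 |a - b|^2 + |g a - g b - mu (a - b)|^2 / (2 (L - mu)).
   With z_k = (1 + 1/gamma) (x_k - x_star) - (1/gamma) (y_k - x_star) - gamma/(mu (1 + gamma)) g x_k
   the potential
     Phi_k = f x_k - f x_star + mu/2 |z_k|^2 - |g x_k|^2 / (2 L)
   satisfies Phi_(k+1) <= Phi_k / (1 + gamma): the difference is a nonnegative combination
   of interpolation inequalities between x_k, x_(k+1), x_star and of squared norms, as soon
   as L = mu (gamma + 1) (gamma + 2) / gamma^2, which is what the choice of gamma ensures.
   Certificates of the same kind give f x_(k+1) - f x_star <= 2 Phi_k and
   2 Phi_0 <= (1 + gamma) / (2 gamma) (mu + 2 L) / 2 |x_0 - x_star|^2. *)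

Section Edot.
Variables (R : realType) (n : nat).
Implicit Types u v w : 'rV[R]_n.

Lemma edotC u v : edot u v = edot v u.
Proof. by apply: eq_bigr => i _; rewrite mulrC. Qed.

Lemma edotDl u v w : edot (u + v) w = edot u w + edot v w.
Proof. by rewrite /edot -big_split; apply: eq_bigr => i _; rewrite !mxE mulrDl. Qed.

Lemma edotDr u v w : edot w (u + v) = edot w u + edot w v.
Proof. by rewrite edotC edotDl !(edotC w). Qed.

Lemma edotZl (a : R) u v : edot (a *: u) v = a * edot u v.
Proof. by rewrite /edot mulr_sumr; apply: eq_bigr => i _; rewrite !mxE mulrA. Qed.

Lemma edotZr (a : R) u v : edot u (a *: v) = a * edot u v.
Proof. by rewrite edotC edotZl edotC. Qed.

Lemma edotNl u v : edot (- u) v = - edot u v.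
Proof. by rewrite -scaleN1r edotZl mulN1r. Qed.

Lemma edotNr u v : edot u (- v) = - edot u v.
Proof. by rewrite edotC edotNl edotC. Qed.

Lemma edot_ge0 u : 0 <= edot u u.
Proof. by apply: sumr_ge0 => i _; rewrite -expr2 sqr_ge0. Qed.

Lemma edot_eq0 u : edot u u = 0 -> u = 0.
Proof.
move=> u0; apply/rowP => j; rewrite mxE.
have sq_ge0 i : true -> 0 <= u 0 i * u 0 i by rewrite -expr2 sqr_ge0.
have /eqP := @psumr_eq0P _ _ xpredT (fun i => u 0 i * u 0 i) sq_ge0 u0 j isT.
by rewrite mulf_eq0 orbb => /eqP.
Qed.

Lemma enorm_sqr u : enorm u ^+ 2 = edot u u.
Proof. by rewrite sqr_sqrtr // edot_ge0. Qed.

Lemma enorm_ge0 u : 0 <= enorm u.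
Proof. exact: sqrtr_ge0. Qed.

Lemma edot_le_of_sqr u v (s : R) : 0 < s ->
  edot u u <= s ^+ 2 * edot v v -> edot u v <= s * edot v v.
Proof.
move=> s0 uv; have := edot_ge0 (u - s *: v).
rewrite !(edotDl, edotDr, edotNl, edotNr, edotZl, edotZr) (edotC v u) => h.
rewrite -subr_ge0 -(pmulr_rge0 _ s0); nra.
Qed.

End Edot.

Lemma le_quadratic_of_derive (R : realType) (phi dphi : R -> R) (K : R) :
  (forall s : R, is_derive s 1 phi (dphi s)) ->
  (forall s : R, 0 < s < 1 -> dphi s <= dphi 0 + K * s) ->
  phi 1 <= phi 0 + dphi 0 + K / 2.
Proof.
move=> dphiP dphi_le.
pose psi s := phi s - dphi 0 * s - K / 2 * s ^+ 2.
have dpsiP (s : R) : is_derive s 1 psi (dphi s - dphi 0 - K * s).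
  have -> : psi = phi - dphi 0 \*: @id R - (K / 2) \*: @id R ^+ 2 by [].
  apply: is_derive_eq; rewrite /GRing.scale /= mulr1 expr1 mulr1.
  by field.
have [c c01 psi1] := MVT ltr01 (fun s _ => dpsiP s)
  (derivable_within_continuous (fun s _ => @ex_derive _ _ _ _ _ _ _ (dpsiP s))).
have : psi 1 - psi 0 <= 0.
  move: c01; rewrite in_itv /= => /dphi_le; rewrite psi1 subr0 mulr1; lra.
by rewrite /psi !mulr1 expr1n expr0n /= !mulr0 !subr0; lra.
Qed.

Section Gradient.
Variables (R : realType) (n : nat) (f : 'rV[R]_n -> R).
Hypothesis df : forall z, differentiable f z.

Lemma derive_grad (p d : 'rV[R]_n) : 'D_d f p = edot (grad f p) d.
Proof.
rewrite deriveE // {1}(row_sum_delta d) linear_sum; apply: eq_bigr => j _.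
by rewrite linearZ /= mxE -deriveE // mulrC.
Qed.

Lemma is_derive_line (a d : 'rV[R]_n) (t : R) :
  is_derive t 1 (fun s : R => f (a + s *: d)) (edot (grad f (a + t *: d)) d).
Proof.
have shift_line : (fun h : R => h^-1 *: (f (a + (h *: 1 + t) *: d) - f (a + t *: d))) =
    (fun h : R => h^-1 *: (f (h *: d + (a + t *: d)) - f (a + t *: d))).
  by apply/funext => h; rewrite [h%:A]mulr1 scalerDl addrCA addrA addrC.
have dv : derivable f (a + t *: d) d by apply: diff_derivable.
split; first by rewrite /derivable /= shift_line.
by rewrite /derive /= shift_line -derive_grad.
Qed.

End Gradient.

Lemma le_of_forall_sub_mulr_le (R : realFieldType) (a b K : R) : 0 <= K ->
  (forall t, 0 < t -> t <= 1 -> a - K * t <= b) -> a <= b.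
Proof.
move=> K0 le_ab; rewrite leNgt; apply/negP => lt_ba.
have e0 : 0 < a - b by rewrite subr_gt0.
have eK0 : 0 < a - b + K by lra.
have t0 : 0 < (a - b) / (a - b + K) by apply: divr_gt0.
have t1 : (a - b) / (a - b + K) <= 1 by rewrite ler_pdivrMr // mul1r; lra.
have : K * ((a - b) / (a - b + K)) < a - b by rewrite mulrA ltr_pdivrMr //; nra.
by have := le_ab _ t0 t1; lra.
Qed.

Section Smooth.
Variables (R : realType) (n : nat) (f : 'rV[R]_n -> R) (L : R).
Hypothesis df : forall z, differentiable f z.
Hypothesis lip_grad : forall u v, enorm (grad f u - grad f v) <= L * enorm (u - v).
Hypothesis L0 : 0 < L.

Lemma lip_grad_sqr u v :
  edot (grad f u - grad f v) (grad f u - grad f v) <= L ^+ 2 * edot (u - v) (u - v).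
Proof.
rewrite -!enorm_sqr -exprMn lerXn2r ?nnegrE ?enorm_ge0 ?lip_grad //.
by rewrite mulr_ge0 ?enorm_ge0 ?ltW.
Qed.

Lemma grad_line_le a d (s : R) : 0 < s ->
  edot (grad f (a + s *: d)) d <= edot (grad f a) d + (L * s) * edot d d.
Proof.
move=> s0; set u := grad f (a + s *: d) - grad f a.
have -> : grad f (a + s *: d) = grad f a + u by rewrite /u addrCA subrr addr0.
rewrite edotDl lerD2l; apply: edot_le_of_sqr; first exact: mulr_gt0.
have := lip_grad_sqr (a + s *: d) a.
by rewrite addrAC subrr add0r edotZl edotZr -/u [s * (s * _)]mulrA -expr2 exprMn mulrA.
Qed.

Lemma smooth_upper a b :
  f b <= f a + edot (grad f a) (b - a) + L / 2 * edot (b - a) (b - a).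
Proof.
set d := b - a.
have := @le_quadratic_of_derive _ _ _ (L * edot d d) (is_derive_line df a d).
rewrite scale0r scale1r addr0 (_ : a + d = b) ?[L / 2 * _]mulrAC; last first.
  by rewrite addrC subrK.
apply=> s /andP[s0 _].
by rewrite [L * _ * s]mulrAC grad_line_le.
Qed.

Lemma smooth_lower a b :
  f a + edot (grad f a) (b - a) - 3 * L / 2 * edot (b - a) (b - a) <= f b.
Proof.
have ga_gb : edot (grad f a - grad f b) (b - a) <= L * edot (b - a) (b - a).
  apply: edot_le_of_sqr => //; have := lip_grad_sqr a b.
  by rewrite -[b - a]opprB edotNl edotNr opprK.
have := smooth_upper b a.
rewrite -[a - b]opprB edotNr -[grad f b](subrK (grad f a)) edotDl.
rewrite -[grad f b - grad f a]opprB edotNl edotNl edotNr opprK; lra.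
Qed.

Lemma grad_eq0_of_min xs : (forall z, f xs <= f z) -> grad f xs = 0.
Proof.
move=> xs_min; set g := grad f xs; apply: edot_eq0.
have := smooth_upper xs (xs - L^-1 *: g).
rewrite [xs - _ - xs]addrAC subrr add0r !(edotNl, edotNr, edotZl, edotZr) opprK.
have := xs_min (xs - L^-1 *: g); have := edot_ge0 g.
have L0' : L != 0 by rewrite gt_eqF.
rewrite -/g; set G := edot g g => G0 le_min le_descent; apply/eqP; rewrite eq_le G0 andbT.
suff : G / (2 * L) <= 0 by rewrite pmulr_lle0 // invr_gt0 mulr_gt0.
have -> : G / (2 * L) = L^-1 * G - L / 2 * (L^-1 * (L^-1 * G)) by field.
lra.
Qed.

End Smooth.

(* Inner products of combinations of four fixed vectors only depend on their Gram
   matrix; this turns the vector inequalities below into identities for [field]. *)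
Section Combination.
Variables (R : realType) (n : nat).

Definition comb4 (c1 c2 c3 c4 : R) (v1 v2 v3 v4 : 'rV[R]_n) :=
  c1 *: v1 + c2 *: v2 + c3 *: v3 + c4 *: v4.

Lemma edot_comb4 c1 c2 c3 c4 d1 d2 d3 d4 v1 v2 v3 v4 :
  edot (comb4 c1 c2 c3 c4 v1 v2 v3 v4) (comb4 d1 d2 d3 d4 v1 v2 v3 v4) =
  c1 * d1 * edot v1 v1 + (c1 * d2 + c2 * d1) * edot v1 v2
  + (c1 * d3 + c3 * d1) * edot v1 v3 + (c1 * d4 + c4 * d1) * edot v1 v4
  + c2 * d2 * edot v2 v2 + (c2 * d3 + c3 * d2) * edot v2 v3
  + (c2 * d4 + c4 * d2) * edot v2 v4 + c3 * d3 * edot v3 v3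
  + (c3 * d4 + c4 * d3) * edot v3 v4 + c4 * d4 * edot v4 v4.
Proof.
rewrite /comb4 !(edotDl, edotDr, edotZl, edotZr) (edotC v2 v1) (edotC v3 v1)
  (edotC v4 v1) (edotC v3 v2) (edotC v4 v2) (edotC v4 v3).
ring.
Qed.

Lemma comb40 v1 v2 v3 v4 : 0 = comb4 0 0 0 0 v1 v2 v3 v4.
Proof. by rewrite /comb4 !scale0r !addr0. Qed.

Lemma comb4_e1 v1 v2 v3 v4 : v1 = comb4 1 0 0 0 v1 v2 v3 v4.
Proof. by rewrite /comb4 scale1r !scale0r !addr0. Qed.

Lemma comb4_e3 v1 v2 v3 v4 : v3 = comb4 0 0 1 0 v1 v2 v3 v4.
Proof. by rewrite /comb4 scale1r !scale0r add0r addr0 add0r. Qed.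

Lemma comb4_e4 v1 v2 v3 v4 : v4 = comb4 0 0 0 1 v1 v2 v3 v4.
Proof. by rewrite /comb4 scale1r !scale0r !add0r. Qed.

End Combination.

Ltac entrywise := apply/rowP => j; rewrite /comb4 !mxE /=.

Lemma le_of_subr_eq (R : numDomainType) (x y s : R) : 0 <= s -> y - x = s -> x <= y.
Proof. by move=> s0 e; rewrite -subr_ge0 e. Qed.

Section StronglyConvex.
Variables (R : realType) (n : nat) (f : 'rV[R]_n -> R) (L mu : R).
Hypothesis df : forall z, differentiable f z.
Hypothesis lip_grad : forall u v, enorm (grad f u - grad f v) <= L * enorm (u - v).
Hypothesis mu0 : 0 < mu.
Hypothesis muL : mu < L.
Hypothesis sc : strongly_convex mu f.

Let L0 : 0 < L. Proof. exact: lt_trans mu0 muL. Qed.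

(* Convexity along [a + t (b - a)], divided by [t], with the error term controlled by
   [smooth_lower]; then let [t] go to [0]. *)
Lemma strongly_convex_first_order a b :
  f a - mu / 2 * edot a a + (edot (grad f a) (b - a) - mu * edot a (b - a))
  <= f b - mu / 2 * edot b b.
Proof.
set d := b - a; set D := edot d d.
apply: (@le_of_forall_sub_mulr_le _ _ _ ((3 * L / 2 + mu / 2) * D)).
  by rewrite mulr_ge0 ?edot_ge0 // addr_ge0 // divr_ge0 ?mulr_ge0 ?ltW.
move=> t t0 t1.
have := sc b a (ltW t0) t1; rewrite /= !enorm_sqr.
have -> : t *: b + (1 - t) *: a = a + t *: d by entrywise; ring.
clearbody d.
have := smooth_lower df lip_grad L0 a (a + t *: d).
rewrite [a + _ - a]addrAC subrr add0r !(edotDl, edotDr, edotZl, edotZr) (edotC d a) -/D.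
move=> low cvx.
have : t * ((edot (grad f a) d - mu * edot a d) - (3 * L / 2 + mu / 2) * D * t
            - (f b - mu / 2 * edot b b - (f a - mu / 2 * edot a a))) <= 0.
  lra.
by rewrite pmulr_rle0 //; lra.
Qed.

(* Evaluate the strong-convexity bound at [b] and the descent bound at [a]
   in the same point [z]; for this [z] their sum is exactly the claim. *)
Lemma interpolation a b :
  f b + edot (grad f b) (a - b) + mu / 2 * edot (a - b) (a - b)
  + (2 * (L - mu))^-1 * edot (grad f a - grad f b - mu *: (a - b))
                             (grad f a - grad f b - mu *: (a - b)) <= f a.
Proof.
have M0 : L - mu != 0 by rewrite subr_eq0 gt_eqF.
set ga := grad f a; set gb := grad f b; set M := L - mu in M0 *.
set z := a - M^-1 *: (ga - gb - mu *: (a - b)).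
have H1 := strongly_convex_first_order b z.
have H2 := smooth_upper df lip_grad L0 a z.
have Eab : a - b = comb4 1 (-1) 0 0 a b ga gb by entrywise; ring.
have Ee : ga - gb - mu *: (a - b) = comb4 (- mu) mu 1 (-1) a b ga gb by entrywise; ring.
have Ezb : z - b = comb4 (1 + mu / M) (-1 - mu / M) (- M^-1) M^-1 a b ga gb.
  by entrywise; field.
have Eza : z - a = comb4 (mu / M) (- mu / M) (- M^-1) M^-1 a b ga gb.
  by entrywise; field.
have Ez : z = comb4 (1 + mu / M) (- mu / M) (- M^-1) M^-1 a b ga gb.
  by entrywise; field.
have Eb : b = comb4 0 1 0 0 a b ga gb by entrywise; ring.
have Ega : ga = comb4 0 0 1 0 a b ga gb by entrywise; ring.
have Egb : gb = comb4 0 0 0 1 a b ga gb by entrywise; ring.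
rewrite (congr2 (@edot _ _) Egb Ezb) (congr2 (@edot _ _) Eb Ezb) (congr2 (@edot _ _) Ez Ez) in H1.
rewrite (congr2 (@edot _ _) Ega Eza) (congr2 (@edot _ _) Eza Eza) in H2.
rewrite (congr2 (@edot _ _) Egb Eab) (congr2 (@edot _ _) Eab Eab) (congr2 (@edot _ _) Ee Ee).
rewrite -subr_ge0 in H1; rewrite -subr_ge0 in H2.
apply: (le_of_subr_eq (addr_ge0 H1 H2)).
by rewrite !edot_comb4 /M; field.
Qed.

End StronglyConvex.

Section Potential.
Variables (R : realType) (n : nat) (f : 'rV[R]_n -> R) (L mu gm : R) (xs : 'rV[R]_n).
Hypothesis df : forall z, differentiable f z.
Hypothesis lip_grad : forall u v, enorm (grad f u - grad f v) <= L * enorm (u - v).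
Hypothesis mu0 : 0 < mu.
Hypothesis muL : mu < L.
Hypothesis sc : strongly_convex mu f.
Hypothesis xs_min : forall z, f xs <= f z.
Hypothesis gm0 : 0 < gm.
Hypothesis L_gm : L = mu * (gm + 1) * (gm + 2) / gm ^+ 2.

Let L0 : 0 < L. Proof. exact: lt_trans mu0 muL. Qed.
Let grad_xs : grad f xs = 0. Proof. exact: (grad_eq0_of_min df lip_grad L0 xs_min). Qed.
Let L_sub_mu : L - mu = mu * (3 * gm + 2) / gm ^+ 2.
Proof. by rewrite L_gm; field; rewrite gt_eqF. Qed.

Ltac pos := repeat match goal with
  | |- is_true (0 < _ + _) => apply: addr_gt0
  | |- is_true (0 < _ * _) => apply: mulr_gt0
  | |- is_true (0 < _ ^+ _) => apply: exprn_gt0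
  | |- is_true (0 < _^-1) => rewrite invr_gt0
  | |- is_true (0 < _%:R) => by rewrite ltr0n
  | |- is_true (0 < 1) => exact: ltr01
  | |- is_true (0 < _) => assumption
  end.
Ltac nonzero := repeat (apply/andP; split); apply: lt0r_neq0; pos.

Definition zpoint (xk yk : 'rV[R]_n) :=
  (1 + gm^-1) *: (xk - xs) - gm^-1 *: (yk - xs) - (gm / (mu * (1 + gm))) *: grad f xk.

Definition potential (xk yk : 'rV[R]_n) :=
  f xk - f xs + mu / 2 * edot (zpoint xk yk) (zpoint xk yk)
  - (2 * L)^-1 * edot (grad f xk) (grad f xk).

Section Step.
Variables (xk yk x1 y1 : 'rV[R]_n).
Hypothesis y1E : y1 = xk - L^-1 *: grad f xk.
Hypothesis x1E : x1 = y1 + (2 * gm + 1)^-1 *: (y1 - yk) + (2 * gm + 1)^-1 *: (y1 - xk).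

Let w := xk - xs.
Let v := yk - xs.
Let g0 := grad f xk.
Let g1 := grad f x1.
Let r := (2 * gm + 1)^-1.

Ltac expand := rewrite ?x1E ?y1E /w /v /g0 /g1 /r; entrywise; field; nonzero.

Lemma sub_step : xk - x1 = comb4 (- r) r ((1 + 2 * r) / L) 0 w v g0 g1.
Proof. by expand. Qed.

Lemma grad_sub_step :
  g0 - g1 - mu *: (xk - x1) = comb4 (mu * r) (- mu * r) (1 - mu * (1 + 2 * r) / L) (-1) w v g0 g1.
Proof. by expand. Qed.

Lemma opt_sub_step : xs - x1 = comb4 (- (1 + r)) r ((1 + 2 * r) / L) 0 w v g0 g1.
Proof. by expand. Qed.

Lemma opt_grad_sub_step :
  0 - g1 - mu *: (xs - x1) = comb4 (mu * (1 + r)) (- mu * r) (- mu * (1 + 2 * r) / L) (-1) w v g0 g1.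
Proof. by expand. Qed.

Lemma zpoint_cur :
  zpoint xk yk = comb4 (1 + gm^-1) (- gm^-1) (- (gm / (mu * (1 + gm)))) 0 w v g0 g1.
Proof. by rewrite /zpoint; expand. Qed.

Lemma zpoint_step : zpoint x1 y1 =
  comb4 ((1 + gm^-1) * (1 + r) - gm^-1) (- (1 + gm^-1) * r)
    (- (1 + gm^-1) * (1 + 2 * r) / L + gm^-1 / L) (- (gm / (mu * (1 + gm)))) w v g0 g1.
Proof. by rewrite /zpoint -/g1; expand. Qed.

(* The weights [W_i], [P_i] and the vectors of the squares [S_i] are a precomputed
   sum-of-squares certificate: [field] checks that the weighted sum of the [Q_i] and
   [S_i] is exactly the gap between the two sides. *)
Lemma potential_step : potential x1 y1 <= (1 + gm)^-1 * potential xk yk.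
Proof.
have Q1 := interpolation df lip_grad mu0 muL sc xk x1.
have Q2 := interpolation df lip_grad mu0 muL sc xs x1.
rewrite L_sub_mu -/g0 -/g1 in Q1; rewrite L_sub_mu grad_xs -/g1 in Q2.
rewrite (congr2 (@edot _ _) (comb4_e4 w v g0 g1) sub_step) (congr2 (@edot _ _) sub_step sub_step)
  (congr2 (@edot _ _) grad_sub_step grad_sub_step) in Q1.
rewrite (congr2 (@edot _ _) (comb4_e4 w v g0 g1) opt_sub_step) (congr2 (@edot _ _) opt_sub_step opt_sub_step)
  (congr2 (@edot _ _) opt_grad_sub_step opt_grad_sub_step) in Q2.
rewrite /potential zpoint_cur zpoint_step -/g0 -/g1 !edot_comb4.
have S0 := edot_ge0 (comb4 1
  ((- (1 / 2) - (5 / 4) * gm - (1 / 4) * gm ^+ 2 - (1 / 2) * gm ^+ 4)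
   / ((1 / 2) + (5 / 4) * gm + (1 / 4) * gm ^+ 2 + gm ^+ 4 + gm ^+ 5))
  ((- gm ^+ 2 - (5 / 2) * gm ^+ 3 - (1 / 2) * gm ^+ 4 - (3 / 2) * gm ^+ 6 - gm ^+ 7)
   / (1 + 4 * gm + (19 / 4) * gm ^+ 2 + 2 * gm ^+ 3 + (9 / 4) * gm ^+ 4 + 5 * gm ^+ 5
      + 4 * gm ^+ 6 + gm ^+ 7) / mu)
  ((- (1 / 4) * gm ^+ 3 - gm ^+ 4 - (3 / 2) * gm ^+ 5 - gm ^+ 6)
   / ((1 / 2) + (7 / 4) * gm + (3 / 2) * gm ^+ 2 + (1 / 4) * gm ^+ 3 + gm ^+ 4 + 2 * gm ^+ 5
      + gm ^+ 6) / mu) w v g0 g1).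
have S1 := edot_ge0 (comb4 0 1 (gm ^+ 2 / (2 + 3 * gm + gm ^+ 2) / mu)
  ((- 2 - 5 * gm - gm ^+ 2 + 2 * gm ^+ 3) / (2 + 5 * gm + gm ^+ 2) / mu) w v g0 g1).
have S2 := edot_ge0 (comb4 0 0 0 mu^-1 w v g0 g1).
have P0 : 0 < mu * (((1 / 12) + (5 / 24) * gm + (1 / 24) * gm ^+ 2 + (1 / 6) * gm ^+ 4
   + (1 / 6) * gm ^+ 5) / ((1 / 6) * gm + (11 / 12) * gm ^+ 2 + (5 / 3) * gm ^+ 3 + gm ^+ 4)).
  by pos.
have P1 : 0 < mu * (((1 / 12) * gm ^+ 3 + (5 / 24) * gm ^+ 4 + (1 / 24) * gm ^+ 5)
   / ((1 / 3) + (5 / 3) * gm + (11 / 4) * gm ^+ 2 + (5 / 3) * gm ^+ 3 + (11 / 12) * gm ^+ 4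
      + (7 / 3) * gm ^+ 5 + (8 / 3) * gm ^+ 6 + gm ^+ 7)).
  by pos.
have P2 : 0 < mu * ((1 / 2) * gm ^+ 4
   / (4 + 20 * gm + 35 * gm ^+ 2 + 27 * gm ^+ 3 + 9 * gm ^+ 4 + gm ^+ 5)).
  by pos.
have W1 : 0 < (1 + gm)^-1 by pos.
have W2 : 0 < gm / (1 + gm) by pos.
rewrite -subr_ge0 in Q1; rewrite -subr_ge0 in Q2.
apply: (le_of_subr_eq (addr_ge0 (addr_ge0 (mulr_ge0 (ltW W1) Q1) (mulr_ge0 (ltW W2) Q2))
  (addr_ge0 (addr_ge0 (mulr_ge0 (ltW P0) S0) (mulr_ge0 (ltW P1) S1)) (mulr_ge0 (ltW P2) S2)))).
rewrite !edot_comb4 /w /v /g0 /g1 /r L_gm; field; nonzero.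
Qed.

Lemma gap_step_le_potential : f x1 - f xs <= 2 * potential xk yk.
Proof.
have Q1 := interpolation df lip_grad mu0 muL sc xk x1.
have Q2 := interpolation df lip_grad mu0 muL sc xs x1.
have Q3 := interpolation df lip_grad mu0 muL sc xk xs.
rewrite L_sub_mu -/g0 -/g1 in Q1; rewrite L_sub_mu grad_xs -/g1 in Q2.
rewrite L_sub_mu grad_xs -/g0 -/w in Q3.
rewrite (congr2 (@edot _ _) (comb4_e4 w v g0 g1) sub_step) (congr2 (@edot _ _) sub_step sub_step)
  (congr2 (@edot _ _) grad_sub_step grad_sub_step) in Q1.
rewrite (congr2 (@edot _ _) (comb4_e4 w v g0 g1) opt_sub_step) (congr2 (@edot _ _) opt_sub_step opt_sub_step)
  (congr2 (@edot _ _) opt_grad_sub_step opt_grad_sub_step) in Q2.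
have E5 : g0 - 0 - mu *: w = comb4 (- mu) 0 1 0 w v g0 g1 by entrywise; ring.
rewrite (congr2 (@edot _ _) (comb40 w v g0 g1) (comb4_e1 w v g0 g1))
  (congr2 (@edot _ _) (comb4_e1 w v g0 g1) (comb4_e1 w v g0 g1)) (congr2 (@edot _ _) E5 E5) in Q3.
rewrite /potential zpoint_cur -/g0 !edot_comb4.
have S0 := edot_ge0 (comb4
  ((- 1 - (5 / 2) * gm - 3 * gm ^+ 2 - gm ^+ 3) / ((1 / 2) * gm ^+ 2 + gm ^+ 3))
  ((1 + (3 / 2) * gm + (1 / 2) * gm ^+ 2) / ((1 / 2) * gm ^+ 2 + gm ^+ 3))
  ((1 + (3 / 2) * gm + gm ^+ 2) / ((1 / 2) + (3 / 2) * gm + gm ^+ 2) / mu)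
  mu^-1 w v g0 g1).
have S1 := edot_ge0 (comb4
  ((- (5 / 7) - (10 / 7) * gm - (6 / 7) * gm ^+ 2) / ((5 / 7) + gm)) 1
  (((5 / 7) * gm ^+ 2 + (6 / 7) * gm ^+ 3) / ((5 / 7) + (12 / 7) * gm + gm ^+ 2) / mu)
  0 w v g0 g1).
have S2 := edot_ge0 (comb4 1 0 (- gm ^+ 2 / (2 + 3 * gm + gm ^+ 2) / mu) 0 w v g0 g1).
have P0 : 0 < mu * ((1 / 6) * gm ^+ 2 / ((2 / 3) + gm)) by pos.
have P1 : 0 < mu * (((5 / 8) + (7 / 8) * gm) / ((1 / 4) * gm + gm ^+ 2 + gm ^+ 3)) by pos.
have P2 : 0 < mu * (((5 / 21) + (41 / 42) * gm + (23 / 21) * gm ^+ 2 + (1 / 3) * gm ^+ 3)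
   / ((10 / 21) + (29 / 21) * gm + gm ^+ 2)) by pos.
have W1 : 0 < (1 + gm)^-1 by pos.
have W2 : 0 < gm / (1 + gm) by pos.
have W3 : 0 < (1 + 2 * gm) / (1 + gm) by pos.
rewrite -subr_ge0 in Q1; rewrite -subr_ge0 in Q2; rewrite -subr_ge0 in Q3.
apply: (le_of_subr_eq (addr_ge0 (addr_ge0 (addr_ge0 (mulr_ge0 (ltW W1) Q1)
  (mulr_ge0 (ltW W2) Q2)) (mulr_ge0 (ltW W3) Q3))
  (addr_ge0 (addr_ge0 (mulr_ge0 (ltW P0) S0) (mulr_ge0 (ltW P1) S1)) (mulr_ge0 (ltW P2) S2)))).
rewrite !edot_comb4 /w /v /g0 /g1 /r L_gm; field; nonzero.
Qed.

End Step.

Lemma potential_init x0 : 2 * potential x0 x0 <=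
  (1 + gm) / (2 * gm) * ((mu + 2 * L) / 2) * edot (x0 - xs) (x0 - xs).
Proof.
have Q4 := interpolation df lip_grad mu0 muL sc xs x0.
have Q5 := interpolation df lip_grad mu0 muL sc x0 xs.
rewrite L_sub_mu grad_xs in Q4 Q5.
set w := x0 - xs in Q5 *; set g0 := grad f x0 in Q4 Q5 *.
have E6 : xs - x0 = comb4 (-1) 0 0 0 w w g0 g0 by rewrite /w; entrywise; ring.
have E7 : 0 - g0 - mu *: (xs - x0) = comb4 mu 0 (-1) 0 w w g0 g0.
  by rewrite /w; entrywise; ring.
have E8 : g0 - 0 - mu *: w = comb4 (- mu) 0 1 0 w w g0 g0 by entrywise; ring.
rewrite (congr2 (@edot _ _) (comb4_e3 w w g0 g0) E6) (congr2 (@edot _ _) E6 E6) (congr2 (@edot _ _) E7 E7) in Q4.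
rewrite (congr2 (@edot _ _) (comb40 w w g0 g0) (comb4_e1 w w g0 g0))
  (congr2 (@edot _ _) (comb4_e1 w w g0 g0) (comb4_e1 w w g0 g0)) (congr2 (@edot _ _) E8 E8) in Q5.
have Ez : zpoint x0 x0 = comb4 1 0 (- (gm / (mu * (1 + gm)))) 0 w w g0 g0.
  by rewrite /zpoint -/w -/g0; entrywise; field; nonzero.
rewrite /potential Ez -/g0 !edot_comb4.
have S0 := edot_ge0 (comb4 1 0
  ((- (3 / 2) * gm ^+ 3 - (11 / 4) * gm ^+ 4 - (7 / 4) * gm ^+ 5 - gm ^+ 6)
   / (1 + 5 * gm + 10 * gm ^+ 2 + (89 / 8) * gm ^+ 3 + (31 / 4) * gm ^+ 4
      + (29 / 8) * gm ^+ 5 + gm ^+ 6) / mu) 0 w w g0 g0).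
have S1 := edot_ge0 (comb4 0 0 mu^-1 0 w w g0 g0).
have P0 : 0 < mu * (((2 / 3) + (8 / 3) * gm + 4 * gm ^+ 2 + (41 / 12) * gm ^+ 3
   + (7 / 4) * gm ^+ 4 + (2 / 3) * gm ^+ 5) / ((2 / 3) * gm ^+ 3 + gm ^+ 4)) by pos.
have P1 : 0 < mu * ((gm ^+ 2 + (1 / 2) * gm ^+ 3 + (5 / 2) * gm ^+ 4 + (9 / 4) * gm ^+ 5
   + (9 / 8) * gm ^+ 6 + (3 / 4) * gm ^+ 7) / (2 + 11 * gm + 25 * gm ^+ 2
   + (129 / 4) * gm ^+ 3 + (213 / 8) * gm ^+ 4 + 15 * gm ^+ 5 + (45 / 8) * gm ^+ 6
   + gm ^+ 7)) by pos.
rewrite -subr_ge0 in Q4; rewrite -subr_ge0 in Q5.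
apply: (le_of_subr_eq (addr_ge0 (addr_ge0 (mulr_ge0 (ler0n _ 3) Q4) (mulr_ge0 ler01 Q5))
  (addr_ge0 (mulr_ge0 (ltW P0) S0) (mulr_ge0 (ltW P1) S1)))).
rewrite !edot_comb4 L_gm; field; nonzero.
Qed.

Section Iterates.
Variables x y : nat -> 'rV[R]_n.
Hypothesis y0E : y 0%N = x 0%N.
Hypothesis yE : forall k, y k.+1 = x k - L^-1 *: grad f (x k).
Hypothesis xE : forall k, x k.+1 = y k.+1 + (2 * gm + 1)^-1 *: (y k.+1 - y k)
                                       + (2 * gm + 1)^-1 *: (y k.+1 - x k).

Lemma potential_iter_le m :
  potential (x m) (y m) <= (1 + gm)^-1 ^+ m * potential (x 0%N) (y 0%N).
Proof.
elim: m => [|m IHm]; first by rewrite expr0 mul1r.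
apply: le_trans (potential_step (yE m) (xE m)) _.
by rewrite exprS -mulrA ler_wpM2l // invr_ge0 addr_ge0 ?ler01 ?ltW.
Qed.

Lemma gap_iter_le m : f (x m.+1) - f xs <=
  (1 + gm)^-1 ^+ m * ((1 + gm) / (2 * gm) * ((mu + 2 * L) / 2) * edot (x 0%N - xs) (x 0%N - xs)).
Proof.
apply: le_trans (gap_step_le_potential (yE m) (xE m)) _.
have rho0 : 0 <= (1 + gm)^-1 ^+ m by rewrite exprn_ge0 // invr_ge0 addr_ge0 ?ler01 ?ltW.
apply: le_trans (ler_wpM2l (ler0n R 2) (potential_iter_le m)) _.
by rewrite mulrCA y0E ler_wpM2l // potential_init.
Qed.

End Iterates.
End Potential.

(* With [kappa = L / mu], [gm] is the positive root of [(kappa - 1) gm^2 = 3 gm + 2],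
   i.e. [kappa gm^2 = (gm + 1)(gm + 2)]. *)
Lemma gamma_spec (R : realType) (mu L : R) : 0 < mu -> mu < L ->
  let gm := (Num.sqrt (8 * (L / mu) + 1) + 3) / (2 * (L / mu) - 2) in
  0 < gm /\ L = mu * (gm + 1) * (gm + 2) / gm ^+ 2.
Proof.
move=> mu0 muL; set kappa := L / mu; set s := Num.sqrt _ => gm.
have k1 : 1 < kappa by rewrite ltr_pdivlMr // mul1r.
have s0 : 0 <= s by apply: sqrtr_ge0.
have s2 : s ^+ 2 = 8 * kappa + 1 by rewrite sqr_sqrtr //; lra.
have gm0 : 0 < gm by apply: divr_gt0; lra.
have root : (kappa - 1) * gm ^+ 2 - (3 * gm + 2) = 0.
  have -> : (kappa - 1) * gm ^+ 2 - (3 * gm + 2) = (s ^+ 2 - 8 * kappa - 1) / (4 * (kappa - 1)).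
    by rewrite /gm; field; rewrite ?subr_eq0 ?gt_eqF //; lra.
  by rewrite s2 (_ : 8 * kappa + 1 - 8 * kappa - 1 = 0) ?mul0r //; ring.
split=> //; apply: (mulIf (lt0r_neq0 (exprn_gt0 2 gm0))).
rewrite divfK ?gt_eqF ?exprn_gt0 // -(divfK (lt0r_neq0 mu0) L) -/kappa; nra.
Qed.

Lemma exprz_two_sub_succ (R : unitRingType) (x : R) (m : nat) : x \is a GRing.unit ->
  x ^ (2%:Z - m.+1%:Z) = x * x^-1 ^+ m.
Proof.
move=> xU; have -> : 2%:Z - m.+1%:Z = 1 + (- m%:Z) by rewrite -addn1 PoszD; ring.
by rewrite exprzDr // expr1z -exprnN exprVn.
Qed.

Unset Implicit Arguments. Set Strict Implicit.

Theorem theorem4 (R : realType) (n : nat) (f : 'rV[R]_n -> R) (mu L : R)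
  (xs : 'rV[R]_n) (x y : nat -> 'rV[R]_n) :
  (forall z, differentiable f z) ->
  strongly_convex mu f ->
  (forall u v, enorm (grad f u - grad f v) <= L * enorm (u - v)) ->
  0 < mu -> mu < L ->
  (forall z, f xs <= f z) ->
  let kappa := L / mu in
  let gamma := (Num.sqrt (8 * kappa + 1) + 3) / (2 * kappa - 2) in
  y 0%N = x 0%N ->
  (forall k, y k.+1 = x k - L^-1 *: grad f (x k)) ->
  (forall k, x k.+1 = y k.+1 + (2 * gamma + 1)^-1 *: (y k.+1 - y k)
                             + (2 * gamma + 1)^-1 *: (y k.+1 - x k)) ->
  forall k : nat, (1 <= k)%N ->
    f (x k) - f xs <=
      (1 + gamma) ^ (2%:Z - k%:Z) / (2 * gamma)
      * ((mu + 2 * L) / 2) * enorm (x 0%N - xs) ^+ 2.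
Proof.
move=> df sc lip_grad mu0 muL xs_min kappa gamma y0E yE xE [//|m] _.
have [gm0 L_gm] : 0 < gamma /\ L = mu * (gamma + 1) * (gamma + 2) / gamma ^+ 2.
  exact: gamma_spec.
apply: le_trans (gap_iter_le df lip_grad mu0 muL sc xs_min gm0 L_gm y0E yE xE m) _.
rewrite exprz_two_sub_succ ?unitfE ?gt_eqF ?addr_gt0 // enorm_sqr.
apply: le_of_subr_eq (lexx 0) _.
by field; rewrite gt_eqF ?addr_gt0.
Qed.
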